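(* Let $|\Phi\rangle=\sum_{z\in F^d,y\in F}\phi_{z,y}|z\rangle|y\rangle$ be a pure state with $\phi_z:=\big(\sum_y|\phi_{z,y}|^2\big)^{1/2}>0$ for every $z\in F^d$. Let $\gamma=V_{QLDT}(|\Phi\rangle,G)$ and $N=\frac{|F|^d-1}{|F|-1}$, and assume $\gamma\ge |F|^{-1}$. Then $$\Big(\gamma-\frac1{|F|}\Big)^2\le \frac{1}{|F|^{d}N}\sum_{z\in F^d}\sum_{\ell\in L(z)}\frac{|\phi_{z,g_\ell(z)}|^2}{\phi_z^2},$$ where $L(z)$ is the set of the $N$ lines containing $z$. Consequently there exists a (deterministic) function $f':F^d\to F$ with $\mathrm{Agr}[f',G]\ge(\gamma-|F|^{-1})^2$.
   Context: Setting. - $F$ is a finite field with $|F|=2^a$, $d\ge2$ and $r\ge0$ are integers; $\mathcal H_{d+1}=\mathbb C^{|F|^{d+1}}$ with basis $|z\rangle|y\rangle$, $z\in F^d$, $y\in F$. - $L$ is the set of lines of $F^d$. - $G=\{g_\ell\}_{\ell\in L}$ with each $g_\ell:\ell\to F$ a polynomial of degree $\le r$ along the line. Quantum low degree test. - Step I: uniformly random invertible linear $E:F^d\to F^d$. Apply $|z\rangle|y\rangle\mapsto|E(z)\rangle|y\rangle$, then measure the first $d-1$ registers with outcome $b$, obtaining the line $\ell=\{u+(v-u)t\}$ with $E(u)=(b,0)$, $E(v)=(b,1)$, and the collapsed state $|\Phi'\rangle$ of the last two registers. - Step II: with $|e_1\rangle=|F|^{-1/2}\sum_t|t\rangle|g_\ell(u+(v-u)t)\rangle$,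 accept with probability $|\langle e_1|\Phi'\rangle|^2$. - $V_{QLDT}(|\Phi\rangle,G)$ is the overall acceptance probability. Agreement. For $f':F^d\to F$: $\mathrm{Agr}[f',g_\ell]=\Pr_{z\in\ell}[f'(z)=g_\ell(z)]$ and $\mathrm{Agr}[f',G]=\mathbb E_{\ell\in L}\mathrm{Agr}[f',g_\ell]$, all under uniform distributions. *)

(* Complex amplitudes live in R[i] for an arbitrary
   real closed field R (this covers the usual complex numbers). *)
From HB Require Import structures.
From mathcomp Require Import all_boot all_order all_algebra all_field.
From mathcomp Require Import complex.
Set Implicit Arguments. Unset Strict Implicit. Unset Printing Implicit Defensive.
Import Order.TTheory GRing.Theory Num.Theory.
Local Open Scope ring_scope.

Section QLDT.
Variables (F : finFieldType) (d : nat) (R : rcfType).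
Local Notation C := R[i].
Local Notation pt := 'rV[F]_d.

Definition line_of (u w : pt) : {set pt} := [set u + t *: w | t : F].

Definition isLine (l : {set pt}) : bool :=
  [exists u : pt, exists w : pt, (w != 0) && (l == line_of u w)].
Definition Lines : {set {set pt}} := [set l | isLine l].

Definition LinesThrough (z : pt) : {set {set pt}} := [set l in Lines | z \in l].

Definition low_degree_family (r : nat) (G : {set pt} -> pt -> F) : Prop :=
  forall l, l \in Lines -> forall u w : pt, w != 0 -> l = line_of u w ->
    exists p : {poly F}, (size p <= r.+1)%N /\ forall t : F, G l (u + t *: w) = p.[t].

Definition pure_state (phi : pt -> F -> C) : Prop :=
  \sum_(z : pt) \sum_(y : F) `|phi z y| ^+ 2 = 1.

Definition phinorm (phi : pt -> F -> C) (z : pt) : C :=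
  sqrtC (\sum_(y : F) `|phi z y| ^+ 2).

(* Step I.  E(z) = z *m E ; invertible linear maps *)
Definition GLset : {set 'M[F]_d} := [set E : 'M[F]_d | E \in unitmx].

Definition setlast (b : pt) (t : F) : pt :=
  \row_(i < d) (if i.+1 == d then t else b 0 i).

(* measurement outcomes b in F^{d-1}, encoded as vectors with last coordinate 0 *)
Definition Outcomes : {set pt} :=
  [set b : pt | [forall i : 'I_d, (i.+1 == d) ==> (b 0 i == 0)]].

Definition uE (E : 'M[F]_d) (b : pt) : pt := setlast b 0 *m invmx E.
Definition vE (E : 'M[F]_d) (b : pt) : pt := setlast b 1 *m invmx E.
Definition lineE (E : 'M[F]_d) (b : pt) : {set pt} :=
  [set uE E b + t *: (vE E b - uE E b) | t : F].

Definition prob_outcome (phi : pt -> F -> C) (E : 'M[F]_d) (b : pt) : C :=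
  \sum_(t : F) \sum_(y : F) `|phi (setlast b t *m invmx E) y| ^+ 2.

Definition collapsed (phi : pt -> F -> C) (E : 'M[F]_d) (b : pt) (t y : F) : C :=
  phi (setlast b t *m invmx E) y / sqrtC (prob_outcome phi E b).

Definition e1 (G : {set pt} -> pt -> F) (E : 'M[F]_d) (b : pt) (t y : F) : C :=
  if y == G (lineE E b) (uE E b + t *: (vE E b - uE E b))
  then (sqrtC (#|F|%:R : C))^-1 else 0.

Definition accept_prob (phi : pt -> F -> C) (G : {set pt} -> pt -> F)
    (E : 'M[F]_d) (b : pt) : C :=
  `| \sum_(t : F) \sum_(y : F) (e1 G E b t y)^* * collapsed phi E b t y | ^+ 2.

Definition V_QLDT (phi : pt -> F -> C) (G : {set pt} -> pt -> F) : C :=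
  (#|GLset|%:R)^-1 *
  \sum_(E in GLset) \sum_(b in Outcomes) prob_outcome phi E b * accept_prob phi G E b.

Definition Agr_line (f' : pt -> F) (G : {set pt} -> pt -> F) (l : {set pt}) : C :=
  #|[set z in l | f' z == G l z]|%:R / #|l|%:R.
Definition Agr (f' : pt -> F) (G : {set pt} -> pt -> F) : C :=
  (#|Lines|%:R)^-1 * \sum_(l in Lines) Agr_line f' G l.

End QLDT.

From HB Require Import structures.
From mathcomp Require Import all_boot all_order all_algebra all_field.
From mathcomp Require Import complex.
From mathcomp Require Import ring.
Set Implicit Arguments. Unset Strict Implicit. Unset Printing Implicit Defensive.
Import Order.TTheory GRing.Theory Num.Theory.
Local Open Scope ring_scope.

(* Conditioned on the outcome b, the test accepts with probability
   |sum_(z in l) phi_(z, g_l(z))|^2 / (|F| Pr[b]), and since GL_d(F) acts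
   transitively on nonzero vectors, no line arises from more than a 1/N
   fraction of the choices (E, b).  Hence, writing m_l(z) = |phi_(z, g_l(z))|,
   gamma <= (|F| N)^-1 sum_l (sum_(z in l) m_l(z))^2.  Every point lies on at
   most N lines and m_l(z)^2 <= phi_z^2, so the diagonal terms contribute at
   most N and the cross terms are at least lam = |F| N (gamma - 1/|F|).  By
   AM-GM, 2 lam m_l(z) m_l(z') <= lam^2 phi_z^2 phi_z'^2 + m_l(z)^2 / phi_z^2;
   since two points lie on at most one line, summing gives
   2 lam^2 <= lam^2 + (|F| - 1) T with T the sum of the statement, which
   rearranges to the first claim.  Finally T <= sum_z max_y #{l | z \in l,
   g_l(z) = y}, which is |L| |F| times the agreement of the plurality vote
   f'(z) = argmax_y #{l | z \in l, g_l(z) = y} with G.  Neither the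
   characteristic of F nor the degree bound on G plays a role. *)

Lemma amgm_cross (C : numFieldType) (lam a b u v : C) :
  0 <= lam -> 0 <= a -> 0 <= b -> 0 < u -> 0 < v -> b ^+ 2 <= v ->
  2 * lam * (a * b) <= lam ^+ 2 * (u * v) + a ^+ 2 / u.
Proof.
move=> lam_ge0 a_ge0 b_ge0 u_gt0 v_gt0 b2_le_v.
have uv_gt0 : 0 < u * v by rewrite mulr_gt0.
apply: (@le_trans _ _ (lam ^+ 2 * (u * v) + (a * b) ^+ 2 / (u * v))).
  rewrite -subr_ge0.
  have -> : lam ^+ 2 * (u * v) + (a * b) ^+ 2 / (u * v) - 2 * lam * (a * b)
      = (lam * (u * v) - a * b) ^+ 2 / (u * v).
    by field; rewrite !lt0r_neq0.
  apply: divr_ge0; last exact: ltW.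
  by apply: real_exprn_even_ge0; rewrite // rpredB // ger0_real // mulr_ge0 // ltW.
rewrite lerD2l exprMn invfM mulrACA ler_piMr //.
  by rewrite divr_ge0 ?exprn_ge0 // ltW.
by rewrite ler_pdivrMr // mul1r.
Qed.

Section Incidence.
Variables (T : finType) (S : {set {set T}}).

Lemma sum_incidence (V : nmodType) (f : {set T} -> T -> V) :
  \sum_(l in S) \sum_(z in l) f l z = \sum_z \sum_(l in S | z \in l) f l z.
Proof. exact: (exchange_big_dep predT). Qed.

Lemma sqr_sum_in (C : comPzRingType) (A : {pred T}) (a : T -> C) :
  (\sum_(z in A) a z) ^+ 2 =
  \sum_(z in A) a z ^+ 2 + \sum_(z in A) \sum_(z' in A | z' != z) a z * a z'.
Proof.
rewrite expr2 big_distrl -big_split; apply: eq_bigr => z zA.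
by rewrite big_distrr (bigD1 z) //= expr2.
Qed.

Hypothesis S_pair_unique : forall z z' : T, z != z' ->
  (#|[set l in S | (z \in l) && (z' \in l)]| <= 1)%N.

Lemma sum_block_pairs_le (C : numDomainType) (w : T -> C) :
  (forall z, 0 <= w z) ->
  \sum_(l in S) \sum_(z in l) \sum_(z' in l | z' != z) w z * w z' <= (\sum_z w z) ^+ 2.
Proof.
move=> w_ge0; rewrite sum_incidence expr2 big_distrl; apply: ler_sum => z _.
rewrite (exchange_big_dep (fun z' => z' != z)) => [|l z' _ /andP[] //].
rewrite big_distrr [X in _ <= X](bigD1 z) //= -[X in X <= _]add0r lerD ?mulr_ge0 //.
apply: ler_sum => z' z'z.
rewrite (eq_bigl (mem [set l in S | (z \in l) && (z' \in l)])); last first.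
  by move=> l; rewrite !inE z'z andbT andbA.
by rewrite sumr_const -mulr_natr ler_piMr ?mulr_ge0 // lern1 S_pair_unique // eq_sym.
Qed.

Variables (C : numFieldType) (k : nat) (w : T -> C) (m : {set T} -> T -> C).
Hypothesis S_card : forall l, l \in S -> #|l| = k.
Hypothesis w_gt0 : forall z, 0 < w z.
Hypothesis m_ge0 : forall l z, 0 <= m l z.
Hypothesis m_sqr_le : forall l z, m l z ^+ 2 <= w z.

Lemma block_cross_terms_le (lam : C) : 0 <= lam ->
  2 * lam * \sum_(l in S) \sum_(z in l) \sum_(z' in l | z' != z) m l z * m l z'
  <= lam ^+ 2 * (\sum_z w z) ^+ 2
     + (k%:R - 1) * \sum_z \sum_(l in S | z \in l) m l z ^+ 2 / w z.
Proof.
move=> lam_ge0.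
have partners l z : l \in S -> z \in l -> \sum_(z' in l | z' != z) (1 : C) = k%:R - 1.
  by move=> lS zl; rewrite -(S_card lS) -sumr_const [in RHS](bigD1 z) //= addrAC subrr add0r.
apply: (@le_trans _ _ (\sum_(l in S) \sum_(z in l) \sum_(z' in l | z' != z)
    (lam ^+ 2 * (w z * w z') + m l z ^+ 2 / w z))).
  rewrite mulr_sumr; apply: ler_sum => l _; rewrite mulr_sumr; apply: ler_sum => z _.
  rewrite mulr_sumr; apply: ler_sum => z' _.
  by apply: amgm_cross; rewrite ?m_ge0 ?w_gt0 ?m_sqr_le.
have -> : \sum_(l in S) \sum_(z in l) \sum_(z' in l | z' != z)
    (lam ^+ 2 * (w z * w z') + m l z ^+ 2 / w z)
  = lam ^+ 2 * \sum_(l in S) \sum_(z in l) \sum_(z' in l | z' != z) w z * w z'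
    + (k%:R - 1) * \sum_(l in S) \sum_(z in l) m l z ^+ 2 / w z.
  rewrite !mulr_sumr -big_split; apply: eq_bigr => l lS.
  rewrite !mulr_sumr -big_split; apply: eq_bigr => z zl.
  rewrite big_split /= !mulr_sumr; congr (_ + _).
  by rewrite -(partners l z) // mulr_suml; apply: eq_bigr => z' _; rewrite mul1r.
rewrite -(sum_incidence (fun l z => m l z ^+ 2 / w z)) lerD2r.
by rewrite ler_wpM2l ?exprn_ge0 // sum_block_pairs_le // => z; exact: ltW.
Qed.
End Incidence.

Section Lines.
Variables (F : finFieldType) (d : nat).
Local Notation pt := 'rV[F]_d.

Lemma line_ofP (u w z : pt) : reflect (exists t, z = u + t *: w) (z \in line_of u w).
Proof. by apply: (iffP imsetP) => [[t _ ->]|[t ->]]; exists t. Qed.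

Lemma mem_line_of (u w : pt) : u \in line_of u w.
Proof. by apply/line_ofP; exists 0; rewrite scale0r addr0. Qed.

Lemma line_of_recenter (u w z : pt) : z \in line_of u w -> line_of u w = line_of z w.
Proof.
case/line_ofP=> s ->; apply/setP=> x; apply/line_ofP/line_ofP=> [[t ->]|[t ->]].
  by exists (t - s); rewrite scalerBl [_ - s *: w]addrC addrA addrK.
by exists (s + t); rewrite scalerDl addrA.
Qed.

Lemma line_ofZ (z w : pt) (c : F) : c != 0 -> line_of z (c *: w) = line_of z w.
Proof.
move=> c0; apply/setP=> x; apply/line_ofP/line_ofP=> [[t ->]|[t ->]].
  by exists (t * c); rewrite scalerA.
by exists (t / c); rewrite scalerA mulfVK.
Qed.

Lemma scale_inj (w : pt) : w != 0 -> injective (fun t : F => t *: w).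
Proof.
move=> w0 s t /eqP; rewrite -subr_eq0 -scalerBl scaler_eq0 (negbTE w0) orbF.
by rewrite subr_eq0 => /eqP.
Qed.

Lemma card_line_of (u w : pt) : w != 0 -> #|line_of u w| = #|F|.
Proof. by move=> w0; rewrite card_imset // => s t /addrI /(scale_inj w0). Qed.

Lemma sum_line_of (V : nmodType) (h : pt -> V) (u w : pt) : w != 0 ->
  \sum_(z in line_of u w) h z = \sum_t h (u + t *: w).
Proof.
move=> w0; rewrite big_imset /=; last by move=> s t _ _ /addrI /(scale_inj w0).
by apply: eq_bigl => t; rewrite inE.
Qed.

Lemma line_of_through (z z' w : pt) : w != 0 -> z' \in line_of z w -> z' != z ->
  line_of z (z' - z) = line_of z w.
Proof.
move=> w0 /line_ofP[s ->] ne; rewrite [z + _ - _]addrAC subrr add0r line_ofZ //.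
by apply: contraNneq ne => ->; rewrite scale0r addr0.
Qed.

Lemma line_of_parallel (u w u' w' : pt) : w != 0 -> w' != 0 ->
  line_of u w = line_of u' w' -> exists2 c, c != 0 & w' = c *: w.
Proof.
move=> w0 w'0 E.
have /line_ofP[s Hs] : u' \in line_of u w by rewrite E mem_line_of.
have /line_ofP[s' Hs'] : u' + 1 *: w' \in line_of u w.
  by rewrite E; apply/line_ofP; exists 1.
have ew : w' = (s' - s) *: w.
  have -> : w' = (u' + 1 *: w') - u' by rewrite scale1r [u' + _ - _]addrAC subrr add0r.
  by rewrite Hs' Hs opprD addrACA subrr add0r scalerBl.
by exists (s' - s) => //; apply: contraNneq w'0 => e; rewrite ew e scale0r.
Qed.

Lemma line_of_Lines (u w : pt) : w != 0 -> line_of u w \in Lines F d.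
Proof.
by move=> w0; rewrite inE; apply/existsP; exists u; apply/existsP; exists w; rewrite w0 /=.
Qed.

Lemma LinesP (l : {set pt}) : l \in Lines F d -> exists u w, w != 0 /\ l = line_of u w.
Proof. by rewrite inE => /existsP[u /existsP[w /andP[w0 /eqP ->]]]; exists u, w. Qed.

Lemma card_Lines_line (l : {set pt}) : l \in Lines F d -> #|l| = #|F|.
Proof. by case/LinesP=> u [w [w0 ->]]; exact: card_line_of. Qed.

Lemma LinesThroughE (z : pt) (l : {set pt}) :
  (l \in LinesThrough z) = (l \in Lines F d) && (z \in l).
Proof. by rewrite in_set. Qed.

Lemma sum_LinesThrough (V : nmodType) (z : pt) (f : {set pt} -> V) :
  \sum_(l in LinesThrough z) f l = \sum_(l in Lines F d | z \in l) f l.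
Proof. by apply: eq_bigl => l; rewrite LinesThroughE. Qed.

Lemma Lines_through2 (z z' : pt) : z != z' ->
  (#|[set l in Lines F d | (z \in l) && (z' \in l)]| <= 1)%N.
Proof.
move=> ne; apply: (@leq_trans #|[set line_of z (z' - z)]|); last by rewrite cards1.
apply: subset_leq_card; apply/subsetP=> l.
rewrite in_set => /andP[/LinesP[u [w [w0 ->]]] /andP[zl z'l]].
have E := line_of_recenter zl; rewrite E in z'l.
by rewrite in_set1 E (line_of_through w0 z'l) // eq_sym.
Qed.

Lemma card_LinesThrough (z : pt) : (#|LinesThrough z| * #|F|.-1 <= #|pt|.-1)%N.
Proof.
(* Double count the pairs (l, w) with w a nonzero direction and l = line_of z w. *)
pose dirs l := [set w : pt | (w != 0) && (line_of z w == l)].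
have dirs_ge l : l \in LinesThrough z -> (#|F|.-1 <= #|dirs l|)%N.
  rewrite LinesThroughE => /andP[/LinesP[u [w [w0 ->]]] zl].
  rewrite (line_of_recenter zl) -(cardsC1 (0 : F)) -(card_imset _ (scale_inj w0)).
  apply: subset_leq_card; apply/subsetP=> x /imsetP[c]; rewrite !inE => c0 ->.
  by rewrite scaler_eq0 negb_or c0 w0 line_ofZ ?eqxx.
apply: (@leq_trans (\sum_(l in LinesThrough z) #|dirs l|)).
  by rewrite -sum_nat_const leq_sum.
rewrite -(cardC1 (0 : pt)) -sum1_card.
under eq_bigr do rewrite -sum1_card.
rewrite (exchange_big_dep (mem (predC1 0))) /= => [|l w _]; last by rewrite !inE => /andP[].
apply: leq_sum => w; rewrite inE => w0.
rewrite (big_pred1 (line_of z w)) // => l; rewrite LinesThroughE [w \in dirs l]inE w0 /=.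
apply/andP/eqP => [[_ /eqP <-] // | ->]; split; last exact: eqxx.
by rewrite line_of_Lines // mem_line_of.
Qed.

Lemma card_Lines : (#|Lines F d| * #|F| = \sum_(z : pt) #|LinesThrough z|)%N.
Proof.
rewrite -sum_nat_const.
under eq_bigr => l /card_Lines_line <- do rewrite -sum1_card.
rewrite (exchange_big_dep predT) //=; apply: eq_bigr => z _.
by rewrite sum1_card; apply: eq_card => l; rewrite LinesThroughE.
Qed.

End Lines.

Lemma unitmx_row_transitive (K : fieldType) (n : nat) (v v' : 'rV[K]_n) :
  v != 0 -> v' != 0 -> exists2 P : 'M[K]_n, P \in unitmx & v *m P = v'.
Proof.
have basis (x : 'rV[K]_n) : x != 0 -> exists2 U : 'M_n, U \in unitmx & x = pid_mx 1 *m U.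
  move=> x0; have := mulmx_ebase x; rewrite rank_rV x0 /=.
  rewrite [col_ebase x]mx11_scalar mul_scalar_mx -scalemxAl scalemxAr => <-.
  exists ((col_ebase x) 0 0 *: row_ebase x) => //.
  rewrite unitmxZ ?row_ebase_unit //.
  by have := col_ebase_unit x; rewrite unitmxE det_mx11.
move=> /basis[U U_unit ->] /basis[U' U'_unit ->].
exists (invmx U *m U'); first by rewrite unitmx_mul unitmx_inv U_unit U'_unit.
by rewrite mulmxA mulmxK.
Qed.

Section MeasuredLines.
Variables (F : finFieldType) (d : nat).
Local Notation pt := 'rV[F]_d.

Definition e_last : pt := setlast 0 1.

(* Step I with matrix E only ever measures lines of direction dirE E; the
   outcome b selects one of the parallel translates. *)
Definition dirE (E : 'M[F]_d) : pt := e_last *m invmx E.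

Lemma setlastE (b : pt) t : setlast b t = setlast b 0 + t *: e_last.
Proof.
apply/rowP=> i; rewrite !mxE; case: ifP => _; first by rewrite add0r mulr1.
by rewrite mulr0 addr0.
Qed.

Lemma setlast_mulmx (E : 'M[F]_d) (b : pt) t :
  setlast b t *m invmx E = uE E b + t *: dirE E.
Proof. by rewrite setlastE mulmxDl -scalemxAl. Qed.

Lemma vE_sub_uE (E : 'M[F]_d) (b : pt) : vE E b - uE E b = dirE E.
Proof. by rewrite /vE /uE (setlastE b 1) scale1r mulmxDl addrAC subrr add0r. Qed.

Lemma lineE_line_of (E : 'M[F]_d) (b : pt) : lineE E b = line_of (uE E b) (dirE E).
Proof. by rewrite /lineE vE_sub_uE. Qed.

Lemma e_last_neq0 : (0 < d)%N -> e_last != 0.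
Proof.
move=> d_gt0; apply/eqP=> /rowP/(_ (Ordinal (etrans (ltn_predL d) d_gt0))).
by rewrite !mxE /= prednK // eqxx => /eqP; rewrite oner_eq0.
Qed.

Lemma Lines_gt0 : (0 < d)%N -> (0 < #|Lines F d|)%N.
Proof.
by move=> d_gt0; apply/card_gt0P; exists (line_of 0 e_last); rewrite line_of_Lines ?e_last_neq0.
Qed.

Lemma dirE_neq0 (E : 'M[F]_d) : (0 < d)%N -> E \in unitmx -> dirE E != 0.
Proof.
move=> d_gt0 E_unit; apply: contraNneq (e_last_neq0 d_gt0) => dir0.
by rewrite -(mulmxKV E_unit e_last) -/(dirE E) dir0 mul0mx.
Qed.

Lemma lineE_Lines (E : 'M[F]_d) (b : pt) : (0 < d)%N -> E \in GLset F d ->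
  lineE E b \in Lines F d.
Proof.
by move=> d_gt0; rewrite inE => E_unit; rewrite lineE_line_of line_of_Lines // dirE_neq0.
Qed.

Lemma lineE_inj (E : 'M[F]_d) (b b' : pt) : E \in unitmx ->
  b \in Outcomes F d -> b' \in Outcomes F d -> lineE E b = lineE E b' -> b = b'.
Proof.
move=> E_unit Ob Ob' ebb'.
have : uE E b \in lineE E b' by rewrite -ebb' lineE_line_of mem_line_of.
rewrite lineE_line_of => /line_ofP[t].
rewrite -setlast_mulmx /uE => /(can_inj (mulmxKV E_unit)) /rowP eq_setlast.
move: Ob Ob'; rewrite !inE => /forallP Ob /forallP Ob'.
apply/rowP=> i; move: (eq_setlast i) (Ob i) (Ob' i); rewrite !mxE.
by case: ifP => //= _ _ /eqP -> /eqP ->.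
Qed.

Definition dir_count (v : pt) : nat := #|[set E in GLset F d | dirE E == v]|.

(* Transitivity of GL_d(F) on nonzero vectors makes dir_count constant there. *)
Lemma dir_count_le (v v' : pt) : v != 0 -> v' != 0 -> (dir_count v <= dir_count v')%N.
Proof.
move=> v0 v'0; have [P P_unit vP] := unitmx_row_transitive v0 v'0.
pose f (E : 'M[F]_d) := invmx (invmx E *m P).
rewrite /dir_count -(card_imset _ (f := f)); last first.
  by move=> E1 E2 /(can_inj invmxK) /(can_inj (mulmxK P_unit)) /(can_inj invmxK).
apply: subset_leq_card; apply/subsetP=> x /imsetP[E].
rewrite !inE => /andP[E_unit /eqP dirEv] ->.
rewrite /f unitmx_inv unitmx_mul unitmx_inv E_unit P_unit /=.
by rewrite /dirE invmxK mulmxA -/(dirE E) dirEv vP.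
Qed.

Lemma dir_countE (v : pt) : dir_count v = (\sum_(E in GLset F d) (dirE E == v))%N.
Proof.
rewrite /dir_count big_mkcond /= -sum1_card big_mkcond; apply: eq_bigr => E _.
by rewrite in_set; case: (E \in GLset F d).
Qed.

Lemma sum_dir_count : (\sum_(v : pt) dir_count v)%N = #|GLset F d|.
Proof.
under eq_bigr do rewrite dir_countE.
rewrite exchange_big /= -sum1_card; apply: eq_bigr => E _.
by rewrite (bigD1 (dirE E)) //= eqxx big1 // => v /negbTE; rewrite eq_sym => ->.
Qed.

Lemma dir_count_bound (v : pt) : v != 0 -> (#|pt|.-1 * dir_count v <= #|GLset F d|)%N.
Proof.
move=> v0; rewrite -sum_dir_count -(cardC1 (0 : pt)) -sum1_card big_distrl /=.
apply: (@leq_trans (\sum_(x in predC1 (0%R : pt)) dir_count x)%N).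
  by apply: leq_sum => x; rewrite inE mul1n => x0; apply: dir_count_le.
by rewrite [X in (_ <= X)%N](bigID (mem (predC1 (0%R : pt)))) /= leq_addr.
Qed.

Definition line_hits (l : {set pt}) : nat :=
  \sum_(E in GLset F d) \sum_(b in Outcomes F d) (lineE E b == l).

Lemma outcomes_on_line (E : 'M[F]_d) (u w : pt) : (0 < d)%N -> w != 0 ->
  E \in GLset F d ->
  (\sum_(b in Outcomes F d) (lineE E b == line_of u w) <=
   \sum_(c : F | c != 0%R) (dirE E == c *: w))%N.
Proof.
move=> d_gt0 w0; rewrite inE => E_unit.
have [b0 /andP[Ob0 /eqP lb0] | no_b] :=
  pickP (fun b => (b \in Outcomes F d) && (lineE E b == line_of u w)); last first.
  by rewrite big1 // => b Ob; have := no_b b; rewrite Ob /= => ->.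
have [c c0 dirEc] : exists2 c, c != 0 & dirE E = c *: w.
  apply: (line_of_parallel (u' := uE E b0) w0 (dirE_neq0 d_gt0 E_unit)).
  by rewrite -lineE_line_of lb0.
rewrite (bigD1 b0) //= lb0 eqxx big1 => [|b /andP[Ob nb]]; last first.
  case: eqP => // lb; case/eqP: nb.
  by apply: (lineE_inj E_unit Ob Ob0); rewrite lb lb0.
by rewrite [X in (_ <= X)%N](bigD1 c) //= dirEc eqxx.
Qed.

Lemma line_hits_bound (l : {set pt}) : (0 < d)%N -> l \in Lines F d ->
  (#|pt|.-1 * line_hits l <= #|F|.-1 * #|GLset F d|)%N.
Proof.
move=> d_gt0 /LinesP[u [w [w0 ->]]].
have hits_le : (line_hits (line_of u w) <= \sum_(c : F | c != 0%R) dir_count (c *: w))%N.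
  apply: (@leq_trans (\sum_(E in GLset F d) \sum_(c : F | c != 0%R) (dirE E == c *: w))).
    by apply: leq_sum => E E_GL; apply: outcomes_on_line.
  by rewrite exchange_big /=; apply: leq_sum => c _; rewrite dir_countE.
rewrite -(cardC1 (0%R : F)) -sum_nat_const.
apply: (leq_trans (leq_mul (leqnn _) hits_le)); rewrite big_distrr /=.
apply: leq_sum => c c0; apply: dir_count_bound.
by rewrite scaler_eq0 negb_or c0 w0.
Qed.

End MeasuredLines.

Lemma sqr_le_of_scaled (C : numFieldType) (q M x T : C) : 1 < q -> q ^+ 2 <= M ->
  0 <= T -> (q * ((M - 1) / (q - 1)) * x) ^+ 2 <= (q - 1) * T ->
  x ^+ 2 <= (M * ((M - 1) / (q - 1)))^-1 * T.
Proof.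
move=> q_gt1 qM T_ge0 scaled_le.
have q_gt0 : 0 < q by apply: lt_trans q_gt1.
have q1_gt0 : 0 < q - 1 by rewrite subr_gt0.
have M_gt1 : 1 < M.
  by apply: lt_le_trans qM; rewrite expr2 (lt_trans q_gt1) // ltr_pMl.
have M_gt0 : 0 < M by apply: lt_trans M_gt1.
have M1_gt0 : 0 < M - 1 by rewrite subr_gt0.
set N := (M - 1) / (q - 1).
have N_gt0 : 0 < N by rewrite divr_gt0.
rewrite ler_pdivlMl; last exact: mulr_gt0.
have -> : M * N * x ^+ 2 = (q * N * x) ^+ 2 * (M / (q ^+ 2 * N)).
  by field; rewrite !lt0r_neq0.
apply: le_trans (ler_wpM2r _ scaled_le) _.
  by rewrite divr_ge0 ?ltW // mulr_gt0 // exprn_gt0.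
have -> : (q - 1) * T * (M / (q ^+ 2 * N)) = T * ((q - 1) ^+ 2 * M / (q ^+ 2 * (M - 1))).
  by rewrite /N; field; rewrite !lt0r_neq0.
apply: ler_piMr => //; rewrite ler_pdivrMr ?mulr_gt0 ?exprn_gt0 // mul1r -subr_ge0.
have -> : q ^+ 2 * (M - 1) - (q - 1) ^+ 2 * M
    = (M - q ^+ 2) * (2 * q - 1) + 2 * q ^+ 2 * (q - 1) by ring.
apply: addr_ge0; apply: mulr_ge0.
- by rewrite subr_ge0.
- by rewrite subr_ge0 mulr2n mulrDl mul1r (le_trans (ltW q_gt1)) // lerDl ltW.
- by rewrite mulr_ge0 ?exprn_ge0 // ltW.
- exact: ltW.
Qed.

Section QLDT_Analysis.
Variables (F : finFieldType) (d : nat) (R : rcfType).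
Local Notation C := R[i].
Local Notation pt := 'rV[F]_d.
Variables (G : {set pt} -> pt -> F) (phi : pt -> F -> C).
Hypothesis phi_pure : pure_state phi.
Hypothesis phinorm_gt0 : forall z, 0 < phinorm phi z.
Hypothesis d_ge2 : (2 <= d)%N.

Let d_gt0 : (0 < d)%N. Proof. exact: leq_trans d_ge2. Qed.

Local Notation q := (#|F|%:R : C).
Local Notation N := ((q ^+ d - 1) / (q - 1)).

Lemma q_gt1 : 1 < q.
Proof. by rewrite ltr1n card_finNzRing_gt1. Qed.

Lemma q_gt0 : 0 < q. Proof. exact: lt_trans q_gt1. Qed.

Lemma qd_gt1 : 1 < q ^+ d.
Proof. by rewrite exprn_egt1 ?q_gt1 // -lt0n d_gt0. Qed.

Lemma N_gt0 : 0 < N.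
Proof. by rewrite divr_gt0 // subr_gt0 ?q_gt1 ?qd_gt1. Qed.

Lemma card_pt_minus1 : (#|pt|.-1)%:R = q ^+ d - 1 :> C.
Proof.
have pt_gt0 : (0 < #|pt|)%N by apply/card_gt0P; exists 0.
by rewrite -subn1 natrB // card_mx mul1n natrX.
Qed.

Lemma card_F_minus1 : (#|F|.-1)%:R = q - 1 :> C.
Proof. by rewrite -subn1 natrB // ltnW // card_finNzRing_gt1. Qed.

Definition weight (z : pt) : C := phinorm phi z ^+ 2.
Definition amp (l : {set pt}) (z : pt) : C := `|phi z (G l z)|.

Lemma weightE z : weight z = \sum_y `|phi z y| ^+ 2.
Proof. by rewrite /weight /phinorm sqrtCK. Qed.

Lemma weight_gt0 z : 0 < weight z.
Proof. by rewrite exprn_gt0. Qed.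

Lemma sum_weight : \sum_z weight z = 1.
Proof. by rewrite -phi_pure; apply: eq_bigr => z _; rewrite weightE. Qed.

Lemma sqr_norm_le_weight z y : `|phi z y| ^+ 2 <= weight z.
Proof. by rewrite weightE (bigD1 y) //= lerDl sumr_ge0 // => x _; rewrite exprn_ge0. Qed.

Lemma outcome_accept E b : E \in GLset F d ->
  prob_outcome phi E b * accept_prob phi G E b =
  `|\sum_(z in lineE E b) phi z (G (lineE E b) z)| ^+ 2 / q.
Proof.
rewrite inE => E_unit.
set l := lineE E b; set p := prob_outcome phi E b.
pose zt t := setlast b t *m invmx E.
have p_gt0 : 0 < p.
  have -> : p = \sum_t weight (zt t) by apply: eq_bigr => t _; rewrite weightE.
  rewrite (bigD1 0) //= ltr_wpDr ?weight_gt0 // sumr_ge0 // => t _.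
  exact: ltW (weight_gt0 _).
set s := (sqrtC q)^-1.
have s_ge0 : 0 <= s by rewrite invr_ge0 sqrtC_ge0 ler0n.
(* e_1 is supported on the graph of g_l, so only y = g_l(z_t) survives *)
have inner t : \sum_y (e1 R G E b t y)^* * collapsed phi E b t y =
    s * (phi (zt t) (G l (zt t)) / sqrtC p).
  rewrite (bigD1 (G l (zt t))) //= big1 ?addr0.
    by rewrite /e1 vE_sub_uE -setlast_mulmx -/l eqxx geC0_conj.
  by move=> y /negbTE ny; rewrite /e1 vE_sub_uE -setlast_mulmx -/l ny conjC0 mul0r.
rewrite /accept_prob (eq_bigr _ (fun t _ => inner t)) -mulr_sumr.
have -> : \sum_(z in l) phi z (G l z) = \sum_t phi (zt t) (G l (zt t)).
  rewrite {1}/l lineE_line_of sum_line_of ?dirE_neq0 //.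
  by apply: eq_bigr => t _; rewrite /zt setlast_mulmx.
rewrite -mulr_suml [s * _]mulrCA normrM exprMn (ger0_norm (x := s * _)); last first.
  by rewrite mulr_ge0 // invr_ge0 sqrtC_ge0 ltW.
rewrite exprMn exprVn sqrtCK /s exprVn sqrtCK.
by field; rewrite (lt0r_neq0 p_gt0) (lt0r_neq0 q_gt0).
Qed.

Definition line_mass (l : {set pt}) : C := (\sum_(z in l) amp l z) ^+ 2.

Lemma line_mass_ge0 l : 0 <= line_mass l.
Proof. by rewrite exprn_ge0 ?sumr_ge0 // => z _; exact: normr_ge0. Qed.

Lemma V_QLDT_le_hits : V_QLDT phi G <=
  (#|GLset F d|%:R * q)^-1 * \sum_(l in Lines F d) line_mass l * (line_hits l)%:R.
Proof.
have regroup E b : E \in GLset F d ->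
    line_mass (lineE E b) = \sum_(l in Lines F d) line_mass l * (lineE E b == l)%:R.
  move=> E_GL; rewrite (bigD1 (lineE E b)) ?lineE_Lines //= eqxx mulr1 big1 ?addr0 //.
  by move=> l /andP[_ /negbTE]; rewrite eq_sym => ->; rewrite mulr0.
have -> : \sum_(l in Lines F d) line_mass l * (line_hits l)%:R =
    \sum_(E in GLset F d) \sum_(b in Outcomes F d) line_mass (lineE E b).
  under [RHS]eq_bigr => E E_GL do under eq_bigr => b _ do rewrite regroup //.
  under [RHS]eq_bigr do rewrite exchange_big.
  rewrite exchange_big /=; apply: eq_bigr => l _.
  rewrite /line_hits natr_sum mulr_sumr; apply: eq_bigr => E _.
  by rewrite natr_sum mulr_sumr.
rewrite invfM /V_QLDT -mulrA ler_wpM2l ?invr_ge0 ?ler0n // mulr_sumr.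
apply: ler_sum => E E_GL; rewrite mulr_sumr; apply: ler_sum => b _.
rewrite outcome_accept // mulrC ler_wpM2l ?invr_ge0 ?ler0n //.
by rewrite /line_mass !expr2 ler_pM // ler_norm_sum.
Qed.

Lemma line_hits_le (l : {set pt}) : l \in Lines F d ->
  (line_hits l)%:R <= #|GLset F d|%:R / N :> C.
Proof.
move=> lL; have := line_hits_bound d_gt0 lL.
rewrite -(ler_nat C) !natrM card_pt_minus1 card_F_minus1 => hits.
rewrite ler_pdivlMr ?N_gt0 // mulrA ler_pdivrMr ?subr_gt0 ?q_gt1 //.
by rewrite mulrC [X in _ <= X]mulrC.
Qed.

Lemma V_QLDT_le_lines : V_QLDT phi G <= (q * N)^-1 * \sum_(l in Lines F d) line_mass l.
Proof.
have GL_gt0 : 0 < #|GLset F d|%:R :> C.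
  by rewrite ltr0n; apply/card_gt0P; exists 1%:M; rewrite inE unitmx1.
apply: (le_trans V_QLDT_le_hits).
apply: (@le_trans _ _ ((#|GLset F d|%:R * q)^-1 *
    \sum_(l in Lines F d) line_mass l * (#|GLset F d|%:R / N))).
  rewrite ler_wpM2l ?invr_ge0 ?mulr_ge0 ?ler0n //; apply: ler_sum => l lL.
  by rewrite ler_wpM2l ?line_hits_le ?line_mass_ge0.
rewrite -big_distrl /= mulrA le_eqVlt; apply/orP; left; apply/eqP.
by field; rewrite !lt0r_neq0 ?subr_gt0 ?qd_gt1 ?q_gt1 ?q_gt0.
Qed.

Lemma card_LinesThrough_le_N (z : pt) : #|LinesThrough z|%:R <= N.
Proof.
have := card_LinesThrough z; rewrite -(ler_nat C) natrM card_pt_minus1 card_F_minus1.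
by rewrite ler_pdivlMr // subr_gt0 q_gt1.
Qed.

Lemma diag_mass_le : \sum_(l in Lines F d) \sum_(z in l) amp l z ^+ 2 <= N.
Proof.
rewrite sum_incidence.
apply: (@le_trans _ _ (\sum_z weight z * N)); last by rewrite -mulr_suml sum_weight mul1r.
apply: ler_sum => z _; rewrite -sum_LinesThrough.
apply: (@le_trans _ _ (\sum_(l in LinesThrough z) weight z)).
  by apply: ler_sum => l _; exact: sqr_norm_le_weight.
rewrite sumr_const -[X in X <= _]mulr_natr ler_wpM2l ?card_LinesThrough_le_N //.
exact: ltW (weight_gt0 z).
Qed.

Definition local_agreement : C :=
  \sum_z \sum_(l in LinesThrough z) amp l z ^+ 2 / weight z.

Lemma local_agreement_ge0 : 0 <= local_agreement.
Proof.
apply: sumr_ge0 => z _; apply: sumr_ge0 => l _.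
by rewrite divr_ge0 ?exprn_ge0 ?normr_ge0 // ltW ?weight_gt0.
Qed.

Lemma scaled_gap_sqr_le : q^-1 <= V_QLDT phi G ->
  (q * N * (V_QLDT phi G - q^-1)) ^+ 2 <= (q - 1) * local_agreement.
Proof.
move=> V_ge; set lam := q * N * (V_QLDT phi G - q^-1).
set cross := \sum_(l in Lines F d) \sum_(z in l) \sum_(z' in l | z' != z) amp l z * amp l z'.
have lam_ge0 : 0 <= lam.
  by rewrite mulr_ge0 ?subr_ge0 // ltW // mulr_gt0 ?q_gt0 ?N_gt0.
have lam_le_cross : lam <= cross.
  have -> : lam = q * N * V_QLDT phi G - N.
    by rewrite /lam; field; rewrite !lt0r_neq0 ?subr_gt0 ?q_gt1 ?q_gt0.
  have qN_gt0 : 0 < q * N by rewrite mulr_gt0 // ?q_gt0 ?N_gt0.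
  have := V_QLDT_le_lines; rewrite ler_pdivlMl // => V_le.
  rewrite lerBlDl; apply: (le_trans V_le).
  rewrite /line_mass; under eq_bigr do rewrite sqr_sum_in.
  by rewrite big_split lerD2r diag_mass_le.
have := block_cross_terms_le (m := amp) (@Lines_through2 F d) (@card_Lines_line F d)
  weight_gt0 (fun l z => normr_ge0 _) (fun l z => sqr_norm_le_weight z _) lam_ge0.
rewrite -/cross sum_weight expr1n mulr1.
under eq_bigr do rewrite -sum_LinesThrough.
rewrite -/local_agreement => cross_le.
(* lam^2 + lam^2 <= 2 lam cross <= lam^2 + (q - 1) local_agreement *)
rewrite -(lerD2l (lam ^+ 2)) (_ : _ + _ = 2 * lam * lam); last by ring.
by apply: le_trans cross_le; rewrite ler_wpM2l // mulr_ge0.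
Qed.

Lemma gap_sqr_le : q^-1 <= V_QLDT phi G ->
  (V_QLDT phi G - q^-1) ^+ 2 <= (q ^+ d * N)^-1 * local_agreement.
Proof.
move=> V_ge; apply: sqr_le_of_scaled q_gt1 _ local_agreement_ge0 (scaled_gap_sqr_le V_ge).
by rewrite ler_eXn2l ?q_gt1.
Qed.

Definition votes (z : pt) (y : F) : nat := \sum_(l in LinesThrough z) (G l z == y).
Definition plurality (z : pt) : F := [arg max_(y > 0) votes z y].

Lemma votes_le_plurality (z : pt) y : (votes z y <= votes z (plurality z))%N.
Proof. by rewrite /plurality; case: arg_maxnP => // y' _; apply. Qed.

Lemma local_agreement_le_votes :
  local_agreement <= \sum_z (votes z (plurality z))%:R.
Proof.
apply: ler_sum => z _.
have -> : \sum_(l in LinesThrough z) amp l z ^+ 2 / weight z =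
    \sum_y `|phi z y| ^+ 2 / weight z * (votes z y)%:R.
  rewrite (eq_bigr (fun l => \sum_y `|phi z y| ^+ 2 / weight z * (G l z == y)%:R)).
    rewrite exchange_big /=; apply: eq_bigr => y _.
    by rewrite /votes natr_sum mulr_sumr.
  move=> l _; rewrite (bigD1 (G l z)) //= eqxx mulr1 big1 ?addr0 //.
  by move=> y /negbTE; rewrite eq_sym => ->; rewrite mulr0.
apply: (@le_trans _ _ (\sum_y `|phi z y| ^+ 2 / weight z * (votes z (plurality z))%:R)).
  apply: ler_sum => y _; rewrite ler_wpM2l ?ler_nat ?votes_le_plurality //.
  by rewrite divr_ge0 ?exprn_ge0 // ltW ?weight_gt0.
by rewrite -!mulr_suml -weightE divff ?mul1r // lt0r_neq0 ?weight_gt0.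
Qed.

Lemma Agr_votes (f' : pt -> F) :
  #|Lines F d|%:R * q * Agr R f' G = \sum_z (votes z (f' z))%:R.
Proof.
have L_neq0 : #|Lines F d|%:R != 0 :> C by rewrite pnatr_eq0 -lt0n Lines_gt0.
rewrite /Agr [_ * q]mulrC -mulrA mulVKf // mulr_sumr.
have -> : \sum_(l in Lines F d) q * Agr_line R f' G l =
    \sum_(l in Lines F d) \sum_(z in l) (f' z == G l z)%:R.
  apply: eq_bigr => l lL; rewrite /Agr_line (card_Lines_line lL) mulrC divfK ?lt0r_neq0 ?q_gt0 //.
  rewrite -sum1_card natr_sum big_mkcond [RHS]big_mkcond; apply: eq_bigr => z _.
  by rewrite in_set; case: (z \in l); case: (f' z == G l z).
rewrite sum_incidence; apply: eq_bigr => z _.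
by rewrite /votes natr_sum sum_LinesThrough; apply: eq_bigr => l _; rewrite eq_sym.
Qed.

Lemma card_Lines_le : #|Lines F d|%:R * q <= q ^+ d * N.
Proof.
rewrite -natrM card_Lines natr_sum.
apply: (@le_trans _ _ (\sum_(z : pt) N)).
  by apply: ler_sum => z _; apply: card_LinesThrough_le_N.
by rewrite sumr_const card_mx mul1n -[X in X <= _]mulr_natl natrX.
Qed.

Lemma plurality_Agr : (q ^+ d * N)^-1 * local_agreement <= Agr R plurality G.
Proof.
have Lq_gt0 : 0 < #|Lines F d|%:R * q by rewrite mulr_gt0 ?q_gt0 // ltr0n Lines_gt0.
apply: (@le_trans _ _ ((#|Lines F d|%:R * q)^-1 * local_agreement)).
  rewrite ler_wpM2r ?local_agreement_ge0 // lef_pV2 ?card_Lines_le ?posrE //.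
  by rewrite mulr_gt0 ?N_gt0 // exprn_gt0 ?q_gt0.
by rewrite ler_pdivrMl // Agr_votes local_agreement_le_votes.
Qed.

End QLDT_Analysis.

Unset Implicit Arguments.

Theorem mainTheorem7 (F : finFieldType) (a : nat) (hF : #|F| = (2 ^ a)%N)
  (d : nat) (hd : (2 <= d)%N) (r : nat) (R : rcfType)
  (G : {set 'rV[F]_d} -> 'rV[F]_d -> F) (hG : low_degree_family r G)
  (phi : 'rV[F]_d -> F -> R[i]) (hphi : pure_state phi)
  (hpos : forall z, 0 < phinorm phi z) :
  let gamma := V_QLDT phi G in
  let q : R[i] := #|F|%:R in
  let N : R[i] := (q ^+ d - 1) / (q - 1) in
  q^-1 <= gamma ->
  (gamma - q^-1) ^+ 2 <=
    (q ^+ d * N)^-1 *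
    \sum_(z : 'rV[F]_d) \sum_(l in LinesThrough z)
       `|phi z (G l z)| ^+ 2 / phinorm phi z ^+ 2
  /\ exists f' : 'rV[F]_d -> F, (gamma - q^-1) ^+ 2 <= Agr R f' G.
Proof.
move=> gamma q N gamma_ge.
have gap := gap_sqr_le hphi hpos hd gamma_ge.
split; first exact: gap.
by exists (plurality G); apply: le_trans gap (plurality_Agr G hpos hd).
Qed.
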